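(* Let $q=1$, $n\in\mathbb N$, let $a<b$ and let $s_0,\dots,s_{2n+1}$ be real numbers such that $H_{1,n},H_{2,n-1},K_{1,n},K_{2,n}$ are positive definite. Then $$\widetilde l_0=\frac{(E^{(2)}_{a,0})^2}{H_{2,0}},\qquad \widetilde m_0=\frac{1}{bs_0-s_1},$$ $$\widetilde l_j=\frac{(\det E^{(2)}_{a,j})^2}{\det H_{2,j}\,\det H_{2,j-1}}\ \ (1\le j\le n-1),\qquad \widetilde m_j=\frac{(\det D^{(3)}_{a,j})^2}{\det K_{1,j}\,\det K_{1,j-1}}\ \ (1\le j\le n).$$
   Context: Let $\widehat s_j:=-ab\,s_j+(a+b)s_{j+1}-s_{j+2}$, $H_{1,j}:=(s_{l+k})_{l,k=0}^j$, $H_{2,j}:=(\widehat s_{l+k})_{l,k=0}^{j}$, $K_{1,j}:=(bs_{l+k}-s_{l+k+1})_{l,k=0}^{j}$, $K_{2,j}:=(-as_{l+k}+s_{l+k+1})_{l,k=0}^j$ (real symmetric $(j+1)\times(j+1)$ matrices). Let $T_0:=0$ and for $j\ge1$ let $T_j$ be the $(j+1)\times(j+1)$ matrix with ones in positions $(l+1,l)$, $l=0,\dots,j-1$, zeros elsewhere; $R_j(x):=(I-xT_j)^{-1}$; $v_j:=(1,0,\dots,0)^{\top}\in\mathbb R^{j+1}$; $u_{2,0}:=-(a+b)s_0+s_1$, $u_{2,j}:=(u_{2,0},-\widehat s_0,\dots,-\widehat s_{j-1})^{\top}$. Scalar DSM parameters: $\lambda_j:=(u_{2,j}+av_js_0)^{\top}R_j(a)^{\top}H_{2,j}^{-1}R_j(a)(u_{2,j}+av_js_0)$,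 $\mu_j:=v_j^{\top}R_j(a)^{\top}K_{1,j}^{-1}R_j(a)v_j$; $\widetilde l_0:=\lambda_0$, $\widetilde l_j:=\lambda_j-\lambda_{j-1}$; $\widetilde m_0:=\mu_0$, $\widetilde m_j:=\mu_j-\mu_{j-1}$. Determinant matrices: with $s^{(3)}_k:=bs_k-s_{k+1}$ and $s^{(2)}_k:=\widehat s_k$, $D^{(3)}_{x,j}$ is the $(j+1)\times(j+1)$ matrix whose rows $0,\dots,j-1$ are $(s^{(3)}_{i},s^{(3)}_{i+1},\dots,s^{(3)}_{i+j})$, $i=0,\dots,j-1$, and whose last row is $(1,x,\dots,x^j)$; $E^{(2)}_{x,j}$ is the $(j+1)\times(j+1)$ matrix whose rows $0,\dots,j-1$ are $(s^{(2)}_{i},\dots,s^{(2)}_{i+j})$, $i=0,\dots,j-1$, and whose last row is $(e_{2,0}(x),\dots,e_{2,j}(x)):=-(u_{2,j}^{\top}+x\,s_0v_j^{\top})R_j(x)^{\top}$. For $j=0$, $E^{(2)}_{a,0}=e_{2,0}(a)=-(u_{2,0}+as_0)$ and $H_{2,0}=\widehat s_0$. *)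

From HB Require Import structures.
From mathcomp Require Import all_boot all_order all_algebra.
Set Implicit Arguments. Unset Strict Implicit. Unset Printing Implicit Defensive.
Import Order.TTheory GRing.Theory Num.Theory.
Local Open Scope ring_scope.

Section Defs.
Variable R : realFieldType.
Variables (a b : R) (s : nat -> R).

Definition shat (j : nat) : R := - (a * b) * s j + (a + b) * s j.+1 - s j.+2.
Definition s3 (k : nat) : R := b * s k - s k.+1.

Definition H1 (j : nat) : 'M[R]_j.+1 := \matrix_(l, k) s (l + k)%N.
Definition H2 (j : nat) : 'M[R]_j.+1 := \matrix_(l, k) shat (l + k)%N.
Definition K1 (j : nat) : 'M[R]_j.+1 := \matrix_(l, k) (b * s (l + k)%N - s (l + k).+1).
Definition K2 (j : nat) : 'M[R]_j.+1 := \matrix_(l, k) (- a * s (l + k)%N + s (l + k).+1).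

Definition Tm (j : nat) : 'M[R]_j.+1 := \matrix_(l, k) ((l == k.+1 :> nat)%:R).
Definition Rm (j : nat) (x : R) : 'M[R]_j.+1 := invmx (1%:M - x *: Tm j).
Definition vv (j : nat) : 'cV[R]_j.+1 := \col_(i < j.+1) ((i == 0 :> nat)%:R).
Definition u20 : R := - (a + b) * s 0 + s 1.
Definition u2 (j : nat) : 'cV[R]_j.+1 :=
  \col_(i < j.+1) (if (i == 0 :> nat) then u20 else - shat i.-1).

Definition lambda (j : nat) : R :=
  ((u2 j + (a * s 0) *: vv j)^T *m (Rm j a)^T *m invmx (H2 j)
     *m Rm j a *m (u2 j + (a * s 0) *: vv j)) 0 0.
Definition mu (j : nat) : R :=
  ((vv j)^T *m (Rm j a)^T *m invmx (K1 j) *m Rm j a *m vv j) 0 0.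

Definition ltilde (j : nat) : R :=
  if j is j'.+1 then lambda j - lambda j' else lambda 0.
Definition mtilde (j : nat) : R :=
  if j is j'.+1 then mu j - mu j' else mu 0.

Definition D3 (x : R) (j : nat) : 'M[R]_j.+1 :=
  \matrix_(i, k) (if (i < j)%N then s3 (i + k)%N else x ^+ k).
Definition e2 (x : R) (j : nat) : 'rV[R]_j.+1 :=
  - (((u2 j)^T + (x * s 0) *: (vv j)^T) *m (Rm j x)^T).
Definition E2 (x : R) (j : nat) : 'M[R]_j.+1 :=
  \matrix_(i, k) (if (i < j)%N then shat (i + k)%N else e2 x j 0 k).

End Defs.

Definition posdef (R : realFieldType) (m : nat) (M : 'M[R]_m) : Prop :=
  M^T = M /\ forall x : 'cV[R]_m, x != 0 -> 0 < (x^T *m M *m x) 0 0.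

From HB Require Import structures.
From mathcomp Require Import all_boot all_order all_algebra.
From mathcomp Require Import ring.
Set Implicit Arguments. Unset Strict Implicit. Unset Printing Implicit Defensive.
Import Order.TTheory GRing.Theory Num.Theory.
Local Open Scope ring_scope.

(* Both [lambda_j] and [mu_j] are quadratic forms [z_j^T M_j^-1 z_j], where
   [M_j] is the [j]-th leading section of a positive definite Hankel matrix
   and [z_j] is the leading part of [z_(j+1)] (because [I - x T_j] is the
   leading block of the lower bidiagonal [I - x T_(j+1)]).  Eliminating the
   last unknown of [M_(j+1) y = z_(j+1)] shows that the increment of such a
   form is [y_N^2 / (M_(j+1)^-1)_NN]; by Cramer's rule both numerator and
   denominator are quotients of determinants, the numerator being that of
   [M_(j+1)] with its last row replaced by [z_(j+1)^T].  For [mu] that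
   bordered matrix is [D^(3)_(a,j)] since [R_j(a) v_j = (a^k)_k], and for
   [lambda] it is [E^(2)_(a,j)] up to the sign of the last row. *)

Local Notation lead := (lift ord_max).

Section Bordering.
Variable R : fieldType.

Definition set_last_row m (A : 'M[R]_m.+1) (v : 'rV[R]_m.+1) : 'M[R]_m.+1 :=
  \matrix_(i, k) if (i < m)%N then A i k else v 0 k.

Lemma row'_set_last_row m (A : 'M[R]_m.+1) v :
  row' ord_max (set_last_row A v) = row' ord_max A.
Proof. by apply/matrixP => i k; rewrite !mxE lift_max ltn_ord. Qed.

Lemma cofactor_row' n (A B : 'M[R]_n) i j :
  row' i A = row' i B -> cofactor A i j = cofactor B i j.
Proof.
move=> eqAB; rewrite /cofactor; congr (_ * \det _); apply/matrixP => r k.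
by have := congr1 (fun M : 'M_(n.-1, n) => M r (lift j k)) eqAB; rewrite !mxE.
Qed.

Lemma invmx_adj n (A : 'M[R]_n) : \det A != 0 -> invmx A = (\det A)^-1 *: \adj A.
Proof. by move=> dA; rewrite /invmx unitmxE unitfE dA. Qed.

Lemma invmx_diag n (A : 'M[R]_n.+1) i : \det A != 0 ->
  invmx A i i = \det (mxsub (lift i) (lift i) A) / \det A.
Proof.
move=> dA; rewrite invmx_adj // !mxE /cofactor -signr_odd addnn odd_double mul1r mulrC.
by congr (\det _ / _); apply/matrixP => r k; rewrite !mxE.
Qed.

Lemma mulmx_invmx_last m (A : 'M[R]_m.+1) (v : 'rV[R]_m.+1) : \det A != 0 ->
  (v *m invmx A) 0 ord_max = \det (set_last_row A v) / \det A.
Proof.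
move=> dA; rewrite invmx_adj // -scalemxAr mxE mulrC.
rewrite (expand_det_row (set_last_row A v) ord_max) mxE; congr (_ * _).
apply: eq_bigr => k _; rewrite !mxE ltnn.
by rewrite (cofactor_row' _ (row'_set_last_row A v)).
Qed.

Lemma det_set_last_rowN m (A : 'M[R]_m.+1) v :
  \det (set_last_row A (- v)) = - \det (set_last_row A v).
Proof.
rewrite (@determinant_multilinear _ _ _ (set_last_row A v) (set_last_row A v)
  ord_max (-1) 0) ?row'_set_last_row ?mulN1r ?mul0r ?addr0 //.
by apply/rowP => k; rewrite !mxE ltnn; ring.
Qed.

Lemma mulmx_split_last p m (A : 'M[R]_(p, m.+1)) (t : 'cV[R]_m.+1) :
  A *m t = colsub lead A *m rowsub lead t + t ord_max 0 *: col ord_max A.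
Proof.
apply/matrixP => i j; rewrite ord1 !mxE big_ord_recr /= mulrC; congr (_ + _).
apply: eq_bigr => k _; rewrite !mxE.
by rewrite (_ : lead k = widen_ord (leqnSn m) k) //; apply: val_inj; exact: lift_max.
Qed.

(* Eliminating the last unknown of [M y = w]: with [g] the last column of
   [M^-1], the vector [t := y - (y_N / g_N) g] vanishes at [N] and its leading
   part solves the truncated system. *)
Lemma quad_invmx_schur m (M : 'M[R]_m.+1) (w : 'cV[R]_m.+1) :
  M^T = M -> \det M != 0 -> \det (mxsub lead lead M) != 0 ->
  (w^T *m invmx M *m w) 0 0
    - ((rowsub lead w)^T *m invmx (mxsub lead lead M) *m rowsub lead w) 0 0
  = (invmx M *m w) ord_max 0 ^+ 2 / invmx M ord_max ord_max.
Proof.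
move=> symM dM dP; set N : 'I_m.+1 := ord_max; set P := mxsub lead lead M.
have uM : M \in unitmx by rewrite unitmxE unitfE.
have uP : P \in unitmx by rewrite unitmxE unitfE.
set Mi := invmx M; set y := Mi *m w; set ga := Mi N N.
have symMi : Mi^T = Mi by rewrite trmx_inv symM.
have ga0 : ga != 0 by rewrite /ga invmx_diag // mulf_neq0 // invr_eq0.
set t := y - (y N 0 / ga) *: col N Mi.
have tN : t N 0 = 0 by rewrite !mxE divfK // subrr.
have Mt : M *m t = w - (y N 0 / ga) *: delta_mx N 0.
  by rewrite mulmxBr -scalemxAr colE /y /Mi !mulKVmx.
have Pt : P *m rowsub lead t = rowsub lead w.
  have := congr1 (rowsub lead) Mt; rewrite mulmx_split_last tN scale0r addr0.
  rewrite -mul_rowsub_mx -mxsubrc => ->; apply/matrixP => i j.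
  by rewrite !mxE lift_eqF mulr0 subr0.
have wg : (w^T *m col N Mi) 0 0 = y N 0.
  rewrite /y !mxE; apply: eq_bigr => k _.
  by rewrite !mxE -[in RHS]symMi mxE mulrC.
have quadM : (w^T *m Mi *m w) 0 0 = (w^T *m y) 0 0 by rewrite mulmxA.
have quadP : ((rowsub lead w)^T *m invmx P *m rowsub lead w) 0 0 = (w^T *m t) 0 0.
  rewrite -mulmxA (_ : invmx P *m rowsub lead w = rowsub lead t); last first.
    by rewrite -Pt mulKmx.
  by rewrite [in RHS]mulmx_split_last tN scale0r addr0 trmx_mxsub.
have quadt : (w^T *m t) 0 0 = (w^T *m y) 0 0 - y N 0 / ga * y N 0.
  by rewrite mulmxBr -scalemxAr [LHS]mxE [X in _ + X]mxE [X in - X]mxE wg mulrC.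
by rewrite quadM quadP quadt; field.
Qed.

Lemma quad_invmx_bordered m (M : 'M[R]_m.+1) (w : 'cV[R]_m.+1) :
  M^T = M -> \det M != 0 -> \det (mxsub lead lead M) != 0 ->
  (w^T *m invmx M *m w) 0 0
    - ((rowsub lead w)^T *m invmx (mxsub lead lead M) *m rowsub lead w) 0 0
  = \det (set_last_row M w^T) ^+ 2 / (\det M * \det (mxsub lead lead M)).
Proof.
move=> symM dM dP; rewrite quad_invmx_schur // invmx_diag //.
have -> : (invmx M *m w) ord_max 0 = (w^T *m invmx M) 0 ord_max.
  by rewrite -{1}symM -trmx_inv -{1}(trmxK w) -trmx_mul mxE.
by rewrite mulmx_invmx_last //; field; apply/andP.
Qed.

Lemma quad_invmx11 (A : 'M[R]_1) (x : 'cV[R]_1) :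
  (x^T *m invmx A *m x) 0 0 = x 0 0 ^+ 2 / A 0 0.
Proof.
have invA : invmx A = (A 0 0)^-1%:M.
  by rewrite [A in LHS]mx11_scalar invmx_scalar.
by rewrite invA mul_mx_scalar -scalemxAl !mxE !big_ord1 !mxE; ring.
Qed.

End Bordering.

Section PositiveDefinite.
Variable R : realFieldType.

Lemma posdef_det_neq0 m (M : 'M[R]_m) : posdef M -> \det M != 0.
Proof.
move=> [_ pdM]; apply/negP => /det0P [v v0 vM].
have : 0 < (v^T^T *m M *m v^T) 0 0 by apply: pdM; rewrite trmx_eq0.
by rewrite trmxK vM mul0mx mxE ltxx.
Qed.

Lemma posdef_mxsub m k (f : 'I_k -> 'I_m) (M : 'M[R]_m) :
  injective f -> posdef M -> posdef (mxsub f f M).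
Proof.
move=> injf [symM pdM]; set E : 'M[R]_(m, k) := colsub f 1%:M.
have ET : E^T = rowsub f 1%:M by rewrite trmx_mxsub trmx1.
have subE : mxsub f f M = E^T *m M *m E.
  by rewrite ET mul_rowsub_mx mul1mx mulmx_colsub mulmx1 mxsubcr.
have ETE : E^T *m E = 1%:M.
  rewrite ET mul_rowsub_mx mul1mx; apply/matrixP => i j.
  by rewrite !mxE (inj_eq injf).
split; first by rewrite subE !trmx_mul trmxK symM mulmxA.
move=> x x0; rewrite subE -!mulmxA mulmxA -trmx_mul mulmxA; apply: pdM.
by apply: contraNneq x0 => Ex0; rewrite -[x]mul1mx -ETE -mulmxA Ex0 mulmx0.
Qed.

Definition hankel (h : nat -> R) n : 'M[R]_n := \matrix_(l, k) h (l + k)%N.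

Lemma tr_hankel h n : (hankel h n)^T = hankel h n.
Proof. by apply/matrixP => i k; rewrite !mxE addnC. Qed.

Lemma mxsub_hankel h m k (f : 'I_k -> 'I_m) :
  (forall i, f i = i :> nat) -> mxsub f f (hankel h m) = hankel h k.
Proof. by move=> fE; apply/matrixP => i j; rewrite !mxE !fE. Qed.

Lemma posdef_hankel_det h n j : (j <= n)%N ->
  posdef (hankel h n.+1) -> \det (hankel h j.+1) != 0.
Proof.
move=> jn pdH.
rewrite -(@mxsub_hankel h n.+1 j.+1 (widen_ord (jn : (j.+1 <= n.+1)%N))) //.
by apply/posdef_det_neq0/posdef_mxsub => // i i' [] /val_inj.
Qed.


Lemma hankel_quad_increment h n j (x : 'cV[R]_j.+2) :
  (j < n)%N -> posdef (hankel h n.+1) ->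
  (x^T *m invmx (hankel h j.+2) *m x) 0 0
    - ((rowsub lead x)^T *m invmx (hankel h j.+1) *m rowsub lead x) 0 0
  = \det (set_last_row (hankel h j.+2) x^T) ^+ 2
      / (\det (hankel h j.+2) * \det (hankel h j.+1)).
Proof.
move=> jn pdH; rewrite -(mxsub_hankel h (@lift_max j.+1)).
apply: quad_invmx_bordered; first exact: tr_hankel.
  exact: posdef_hankel_det pdH.
rewrite (mxsub_hankel h (@lift_max j.+1)); exact: posdef_hankel_det (ltnW jn) pdH.
Qed.

End PositiveDefinite.

Section ShiftResolvent.
Variables (R : realFieldType) (x : R).

Lemma shift_mulmx_entry j (p : 'cV[R]_j.+1) i :
  ((1%:M - x *: Tm R j) *m p) i 0
  = p i 0 - x * (if (0 < i)%N then p (inord i.-1) 0 else 0).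
Proof.
rewrite mulmxBl mul1mx -scalemxAl [LHS]mxE [X in _ + X]mxE [X in - X]mxE.
congr (_ - x * _); rewrite mxE; case: ifP => i0.
  have ij : (i.-1 < j.+1)%N by rewrite (leq_ltn_trans (leq_pred i)).
  rewrite (bigD1 (inord i.-1)) //= mxE inordK //.
  rewrite prednK // eqxx mul1r big1 ?addr0 // => k kn; rewrite mxE.
  case: eqP => ik; last by rewrite mul0r.
  by case/eqP: kn; apply: val_inj; rewrite /= ik /= inordK.
rewrite big1 // => k _; rewrite mxE.
by case: eqP => ik; [move: i0; rewrite ik | rewrite mul0r].
Qed.

Lemma shift_unitmx j : (1%:M - x *: Tm R j) \in unitmx.
Proof.
rewrite unitmxE det_trig; last first.
  apply/is_trig_mxP => i k ik; rewrite !mxE -val_eqE /= (ltn_eqF ik).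
  by rewrite (ltn_eqF (ltn_trans ik (ltnSn k))) mulr0 subr0.
rewrite big1 ?unitr1 // => i _.
by rewrite !mxE eqxx (ltn_eqF (ltnSn i)) mulr0 subr0.
Qed.

Lemma Rm_solve j (p c : 'cV[R]_j.+1) :
  (1%:M - x *: Tm R j) *m p = c -> Rm j x *m c = p.
Proof. by move=> <-; rewrite /Rm mulKmx // shift_unitmx. Qed.

Lemma Rm_vv j : Rm j x *m vv R j = \col_k x ^+ k.
Proof.
apply: Rm_solve; apply/matrixP => i r; rewrite ord1 shift_mulmx_entry !mxE.
case: ifP => i0.
  rewrite inordK ?(leq_ltn_trans (leq_pred i)) // -exprS prednK // subrr.
  by rewrite (gtn_eqF i0).
by move/negbT: i0; rewrite -eqn0Ngt => /eqP ->; rewrite mulr0 subr0 expr0.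
Qed.

Lemma Rm_rowsub j (c : 'cV[R]_j.+2) :
  Rm j x *m rowsub lead c = rowsub lead (Rm j.+1 x *m c).
Proof.
set z := Rm j.+1 x *m c.
have Tz : (1%:M - x *: Tm R j.+1) *m z = c by rewrite /z /Rm mulKVmx // shift_unitmx.
apply: Rm_solve; apply/matrixP => i r; rewrite ord1 -Tz shift_mulmx_entry [RHS]mxE.
rewrite shift_mulmx_entry lift_max mxE.
case: ifP => // i0; rewrite [rowsub _ _ _ _]mxE.
suff -> : lift ord_max (inord i.-1) = inord i.-1 :> 'I_j.+2 by [].
have ij : (i.-1 < j.+1)%N by rewrite (leq_ltn_trans (leq_pred i)).
apply: val_inj; transitivity (nat_of_ord (inord i.-1 : 'I_j.+1)); first exact: lift_max.
by rewrite [RHS]inordK ?inordK // ltnW.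
Qed.

End ShiftResolvent.

Theorem mainTheorem13 (R : realFieldType) (n : nat) (a b : R) (s : nat -> R) :
  (0 < n)%N -> a < b ->
  posdef (H1 s n) -> posdef (H2 a b s n.-1) ->
  posdef (K1 b s n) -> posdef (K2 a s n) ->
  [/\ ltilde a b s 0 = (E2 a b s a 0 0 0) ^+ 2 / (H2 a b s 0 0 0),
      mtilde a b s 0 = 1 / (b * s 0 - s 1),
      (forall j : nat, (1 <= j <= n.-1)%N ->
         ltilde a b s j = (\det (E2 a b s a j)) ^+ 2
                          / (\det (H2 a b s j) * \det (H2 a b s j.-1))) &
      (forall j : nat, (1 <= j <= n)%N ->
         mtilde a b s j = (\det (D3 b s a j)) ^+ 2
                          / (\det (K1 b s j) * \det (K1 b s j.-1)))].
Proof.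
move=> _ _ _ pdH2 pdK1 _.
pose zl j := Rm j a *m (u2 a b s j + (a * s 0) *: vv R j).
pose zm j := Rm j a *m vv R j.
have lamE j : lambda a b s j = ((zl j)^T *m invmx (hankel (shat a b s) j.+1) *m zl j) 0 0.
  by rewrite /lambda -trmx_mul -!mulmxA.
have muE j : mu a b s j = ((zm j)^T *m invmx (hankel (s3 b s) j.+1) *m zm j) 0 0.
  by rewrite /mu -trmx_mul -!mulmxA.
have zl_lead j : zl j = rowsub lead (zl j.+1).
  rewrite /zl -Rm_rowsub; congr (_ *m _).
  by apply/matrixP => i k; rewrite !mxE lift_max.
have zm_lead j : zm j = rowsub lead (zm j.+1).
  by rewrite /zm !Rm_vv; apply/matrixP => i k; rewrite !mxE lift_max.
have E2E j : E2 a b s a j = set_last_row (hankel (shat a b s) j.+1) (- (zl j)^T).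
  have e2E : e2 a b s a j = - (zl j)^T by rewrite /e2 trmx_mul linearD linearZ.
  by rewrite /E2 e2E; apply/matrixP => i k; rewrite !mxE.
have D3E j : D3 b s a j = set_last_row (hankel (s3 b s) j.+1) (zm j)^T.
  by rewrite /zm Rm_vv; apply/matrixP => i k; rewrite !mxE.
split.
- by rewrite /ltilde lamE quad_invmx11 E2E [in RHS]mxE /= !mxE sqrrN.
- by rewrite /mtilde /= muE quad_invmx11 /zm Rm_vv !mxE expr0 expr1n.
- case=> [|j] //= jn.
  rewrite !lamE (zl_lead j) (hankel_quad_increment (h := shat a b s) _ jn pdH2).
  by rewrite E2E det_set_last_rowN sqrrN.
- case=> [|j] //= jn.
  by rewrite !muE (zm_lead j) (hankel_quad_increment (h := s3 b s) _ jn pdK1) D3E.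
Qed.
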